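(* Let $1\le r\le D$, $Y\in\mathbb{Z}$, and $1\le d<D$. Let $c_{1:d}$ be such that $P_\theta(\mathbf{C}_{1:d}=c_{1:d},Z^{(r,D)}=Y)>0$, and let $N^{<}_d,N^{=}_d,N^{>}_d$ be the numbers of $t\le d$ with $c_t={<}Y$, ${=}Y$, ${>}Y$ respectively. Suppose one of the following three conditions holds: (1) $N^{=}_d\ge1$ and $N^{<}_d=r-1$; (2) $N^{=}_d\ge1$ and $N^{>}_d=D-r$; (3) $N^{=}_d=\max\big(r-N^{<}_d,\;D-r-N^{>}_d+1\big)$. Then, conditionally on $\mathbf{C}_{1:d}=c_{1:d}$ and $Z^{(r,D)}=Y$, the variables $Z_1,\dots,Z_D$ are mutually independent. For $t\le d$, $Z_t\sim\operatorname{trunc}_{\mathbb{Z}_{c_t}}f_\theta$. The variables $Z_{d+1},\dots,Z_D$ are i.i.d. with law: - $\operatorname{trunc}_{[Y,\infty)}f_\theta$ under condition (1); - $\operatorname{trunc}_{(-\infty,Y]}f_\theta$ under condition (2); - $f_\theta$ under condition (3). In particular, $Z_{d+1},\dots,Z_D$ do not depend on $Z^{(r,D)}$ beyond $\mathbf{C}_{1:d}$.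
   Context: Let $f_\theta$ be a probability mass function on $\mathbb{Z}$. Let $Z_1,\dots,Z_D\overset{iid}{\sim}f_\theta$, and let $Z^{(r,D)}$ be the $r$-th smallest of them. For each $t$, $C_t\in\{{<}Y,{=}Y,{>}Y\}$ records whether $Z_t<Y$, $Z_t=Y$ or $Z_t>Y$. Set $\mathbb{Z}_{<Y}=\{\dots,Y-1\}$, $\mathbb{Z}_{=Y}=\{Y\}$ and $\mathbb{Z}_{>Y}=\{Y+1,\dots\}$. For $S\subseteq\mathbb{Z}$, $\operatorname{trunc}_S f$ denotes $f$ restricted to $S\cap\operatorname{supp}(f)$ and renormalized. *)

From HB Require Import structures.
From mathcomp Require Import all_boot all_order all_algebra.
From mathcomp Require Import all_classical all_reals all_analysis.
Set Implicit Arguments. Unset Strict Implicit. Unset Printing Implicit Defensive.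
Import Order.TTheory GRing.Theory Num.Theory.
Local Open Scope classical_set_scope.
Local Open Scope ring_scope.

Inductive cmp := CLt | CEq | CGt.

Definition cls (Y x : int) : cmp :=
  if x < Y then CLt else if x == Y then CEq else CGt.

Definition cmp_set (Y : int) (c : cmp) : set int :=
  match c with
  | CLt => [set x | x < Y]
  | CEq => [set Y]
  | CGt => [set x | Y < x]
  end.

Definition is_pmf (R : realType) (f : int -> R) : Prop :=
  (forall x, 0 <= f x) /\ (\esum_(x in setT) (f x)%:E = 1)%E.

Definition mass (R : realType) (f : int -> R) (S : set int) : R :=
  fine (\esum_(x in S) (f x)%:E)%E.

Definition trunc (R : realType) (f : int -> R) (S : set int) : int -> R :=
  fun y => \1_S y * f y / mass f S.

(* Z^{(r,D)} : the r-th smallest of z_1..z_D  (r is 1-based) *)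
Definition order_stat (D : nat) (z : {ffun 'I_D -> int}) (r : nat) : int :=
  nth 0 (sort (fun a b : int => a <= b) [seq z i | i : 'I_D]) r.-1.

(* Law of (Z_1,...,Z_D) iid f : P(A) for A a set of outcomes in Z^D.
   Coordinates Z_1..Z_D are indexed by 'I_D = {0,..,D-1}. *)
Definition Pr (R : realType) (f : int -> R) (D : nat)
  (A : set {ffun 'I_D -> int}) : R :=
  fine (\esum_(z in A) (\prod_(t < D) f (z t))%:E)%E.

Definition condPr (R : realType) (f : int -> R) (D : nat)
  (E A : set {ffun 'I_D -> int}) : R :=
  Pr f (A `&` E) / Pr f E.

(* The conditioning event {C_{1:d} = c_{1:d}, Z^{(r,D)} = Y};
   c t is the prescribed value of C_{t+1} for t < d. *)
Definition cond_event (D : nat) (Y : int) (r d : nat) (c : nat -> cmp)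
  : set {ffun 'I_D -> int} :=
  [set z : {ffun 'I_D -> int} | (forall t : 'I_D, (t < d)%N -> cls Y (z t) = c t)
           /\ order_stat z r = Y].

Definition is_lt (c : cmp) : bool := if c is CLt then true else false.
Definition is_eq (c : cmp) : bool := if c is CEq then true else false.
Definition is_gt (c : cmp) : bool := if c is CGt then true else false.

Definition Nlt (c : nat -> cmp) (d : nat) : nat := count (fun t => is_lt (c t)) (iota 0 d).
Definition Neq (c : nat -> cmp) (d : nat) : nat := count (fun t => is_eq (c t)) (iota 0 d).
Definition Ngt (c : nat -> cmp) (d : nat) : nat := count (fun t => is_gt (c t)) (iota 0 d).

Definition cond_indep_with_laws (R : realType) (f : int -> R) (D : nat)
  (E : set {ffun 'I_D -> int}) (law : 'I_D -> int -> R) : Prop :=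
  (forall z : {ffun 'I_D -> int},
      condPr f E [set z' : {ffun 'I_D -> int} | forall t, z' t = z t]
      = \prod_(t < D) condPr f E [set z' : {ffun 'I_D -> int} | z' t = z t])
  /\ (forall (t : 'I_D) (y : int), condPr f E [set z' : {ffun 'I_D -> int} | z' t = y] = law t y).

Definition mixed_law (R : realType) (f : int -> R) (D : nat) (Y : int)
  (d : nat) (c : nat -> cmp) (g : int -> R) : 'I_D -> int -> R :=
  fun t => if (t < d)%N then trunc f (cmp_set Y (c t)) else g.

Arguments cond_event D Y r d c : clear implicits.
Arguments mixed_law [R] f D Y d c g.

(* On the event C_{1:d} = c_{1:d}, the r-th order statistic equals Y iff
   #{t | Z_t < Y} <= r - 1 < #{t | Z_t <= Y}.  The first d coordinates
   contribute exactly N^<_d and N^<_d + N^=_d to these two counts, so under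
   (1) the condition reduces to Z_t >= Y for every t > d, under (2) to
   Z_t <= Y for every t > d, and under (3) it holds automatically.  In each
   case the conditioning event is a product set A_1 x ... x A_D, and
   conditioning the i.i.d. law on a product set leaves the coordinates
   independent, the t-th one with law trunc_{A_t} f. *)

From HB Require Import structures.
From mathcomp Require Import all_boot all_order all_algebra.
From mathcomp Require Import all_classical all_reals all_analysis.
From mathcomp Require Import zify.
Import Order.TTheory GRing.Theory Num.Theory.
Local Open Scope classical_set_scope.
Local Open Scope ring_scope.

Lemma count_map_enum {I : finType} {T : Type} (z : I -> T) (p : pred T) :
  count p [seq z i | i : I] = #|[pred i | p (z i)]|.
Proof. by rewrite -sum1_count big_map big_enum_cond sum1_card. Qed.

Lemma count_iota_card (P : pred nat) {d D : nat} : (d <= D)%N ->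
  count P (iota 0 d) = #|[pred i : 'I_D | (i < d)%N && P i]|.
Proof.
move=> dD; rewrite -sum1_count -sum1_card -{1}(subn0 d) big_mkord.
by rewrite (big_ord_widen_cond D P (fun _ => 1%N) dD); apply: eq_bigl => i; rewrite andbC.
Qed.

Lemma count_cmp {T : Type} (k : T -> cmp) (s : seq T) :
  (count (fun x => is_lt (k x)) s + count (fun x => is_eq (k x)) s
     + count (fun x => is_gt (k x)) s)%N = size s.
Proof. by elim: s => //= x s <-; case: (k x) => /=; lia. Qed.

Lemma count_lt_or_eq {T : Type} (k : T -> cmp) (s : seq T) :
  count (fun x => is_lt (k x) || is_eq (k x)) s =
  (count (fun x => is_lt (k x)) s + count (fun x => is_eq (k x)) s)%N.
Proof. by elim: s => //= x s ->; case: (k x) => /=; lia. Qed.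

Lemma is_lt_cls (Y x : int) : is_lt (cls Y x) = (x < Y).
Proof. by rewrite /cls; case: ltgtP. Qed.

Lemma is_eq_cls (Y x : int) : is_eq (cls Y x) = (x == Y).
Proof. by rewrite /cls; case: ltgtP. Qed.

Lemma is_gt_cls (Y x : int) : is_gt (cls Y x) = (Y < x).
Proof. by rewrite /cls; case: ltgtP. Qed.

Lemma is_le_cls (Y x : int) : is_lt (cls Y x) || is_eq (cls Y x) = (x <= Y).
Proof. by rewrite /cls le_eqVlt; case: ltgtP. Qed.

Definition tail_count {D : nat} (d : nat) (z : 'I_D -> int) (p : pred int) : nat :=
  #|[pred i : 'I_D | (d <= i)%N && p (z i)]|.

Lemma tail_count_eq0 {D} d (z : 'I_D -> int) (p : pred int) :
  tail_count d z p = 0%N <-> forall t : 'I_D, (d <= t)%N -> ~~ p (z t).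
Proof.
split=> [/card0_eq z_tail t dt | z_tail].
  by move: (z_tail t); rewrite !inE dt /= => ->.
by apply: eq_card0 => t; rewrite !inE; case: leqP => //= /z_tail /negbTE.
Qed.

Lemma sorted_nth_count {disp} {T : porderType disp} (x0 : T) {s : seq T} {p : pred T} :
  sorted (fun a b => (a <= b)%O) s -> (forall a b, (a <= b)%O -> p b -> p a) ->
  forall i, (i < size s)%N -> p (nth x0 s i) = (i < count p s)%N.
Proof.
move=> + p_down; elim: s => [//|x s IH] /= x_s.
have s_sorted := path_sorted x_s.
have x_min := order_path_min (@le_trans _ T) x_s.
have notp_rest y : y \in s -> ~~ p x -> ~~ p y.
  by move=> ys; apply: contra; apply: p_down; exact: (allP x_min).
case px: (p x) => -[|i] //= i_lt; first by rewrite IH.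
all: have -> : count p s = 0%N by apply/eqP; rewrite -leqn0 leqNgt -has_count;
  apply/hasPn => y /notp_rest; rewrite px; apply.
  by rewrite px.
by apply/negbTE/notp_rest; [exact: mem_nth | rewrite px].
Qed.

Lemma order_stat_eqE D (z : {ffun 'I_D -> int}) r Y : (1 <= r <= D)%N ->
  (order_stat z r == Y) =
  (count (fun x => (x < Y)%R) [seq z i | i : 'I_D] <= r.-1 <
     count (fun x => (x <= Y)%R) [seq z i | i : 'I_D])%N.
Proof.
move=> /andP[r_gt0 r_le]; rewrite /order_stat.
set s := sort _ _.
have s_sorted : sorted (fun a b : int => a <= b) s.
  by apply: sort_sorted => a b; apply: le_total.
have r_lt : (r.-1 < size s)%N by rewrite size_sort size_map size_enum_ord; case: r r_gt0 r_le.
have/permP s_perm : perm_eq s [seq z i | i : 'I_D] by apply/permEl/perm_sort.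
rewrite -!s_perm leqNgt -(sorted_nth_count 0 s_sorted _ _ r_lt); last first.
  by move=> a b ab /=; apply: le_lt_trans.
rewrite -(sorted_nth_count 0 s_sorted _ _ r_lt); last by move=> a b ab /=; apply: le_trans.
by rewrite -leNgt eq_le andbC.
Qed.

Lemma prefix_counts_sum (c : nat -> cmp) (d : nat) : (Nlt c d + Neq c d + Ngt c d)%N = d.
Proof. by rewrite -[RHS](size_iota 0 d) -(count_cmp c). Qed.

Section ConditioningPrefix.
Context {D d : nat} {Y : int} {c : nat -> cmp} {z : {ffun 'I_D -> int}}.
Context (d_le : (d <= D)%N) (z_prefix : forall t : 'I_D, (t < d)%N -> cls Y (z t) = c t).

Lemma count_prefix_cls (p : pred int) (q : pred cmp) : (forall x, p x = q (cls Y x)) ->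
  count p [seq z i | i : 'I_D] =
  (count (fun t => q (c t)) (iota 0 d) + tail_count d z p)%N.
Proof.
move=> pq; rewrite count_map_enum (count_iota_card _ d_le) -(cardID [pred i : 'I_D | (i < d)%N]).
congr (_ + _)%N; apply: eq_card => i; rewrite !inE.
  case: (ltnP i d) => [i_d|_]; last by rewrite andbF.
  by rewrite pq z_prefix // andbT.
by rewrite -leqNgt.
Qed.

Lemma count_lt_prefix : count (fun x => x < Y) [seq z i | i : 'I_D] =
  (Nlt c d + tail_count d z (fun x => (x < Y)%R))%N.
Proof. by apply: count_prefix_cls => x; rewrite is_lt_cls. Qed.

Lemma count_eq_prefix : count (fun x => x == Y) [seq z i | i : 'I_D] =
  (Neq c d + tail_count d z (fun x => x == Y))%N.
Proof. by apply: count_prefix_cls => x; rewrite is_eq_cls. Qed.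

Lemma count_gt_prefix : count (fun x => Y < x) [seq z i | i : 'I_D] =
  (Ngt c d + tail_count d z (fun x => (Y < x)%R))%N.
Proof. by apply: count_prefix_cls => x; rewrite is_gt_cls. Qed.

Let tail_lt := tail_count d z (fun x => (x < Y)%R).
Let tail_eq := tail_count d z (fun x => x == Y).
Let tail_gt := tail_count d z (fun x => (Y < x)%R).

Lemma tail_counts_sum : (tail_lt + tail_eq + tail_gt)%N = (D - d)%N.
Proof.
have := count_cmp (cls Y) [seq z i | i : 'I_D].
rewrite (eq_count (is_lt_cls Y)) (eq_count (is_eq_cls Y)) (eq_count (is_gt_cls Y)).
rewrite count_lt_prefix count_eq_prefix count_gt_prefix size_map size_enum_ord.
have := count_cmp c (iota 0 d); rewrite size_iota -/(Nlt c d) -/(Neq c d) -/(Ngt c d).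
rewrite -/tail_lt -/tail_eq -/tail_gt; lia.
Qed.

Lemma order_stat_prefixE r : (1 <= r <= D)%N ->
  (order_stat z r == Y) =
  (Nlt c d + tail_lt <= r.-1 < Nlt c d + Neq c d + tail_lt + tail_eq)%N.
Proof.
move=> r_range; rewrite order_stat_eqE // count_lt_prefix -(eq_count (is_le_cls Y)).
rewrite count_lt_or_eq (eq_count (is_lt_cls Y)) (eq_count (is_eq_cls Y)).
by rewrite count_lt_prefix count_eq_prefix !addnA -/tail_lt (addnAC (Nlt c d) tail_lt).
Qed.

Lemma order_stat_eq_tail_ge {r : nat} : (1 <= r <= D)%N ->
  (0 < Neq c d)%N -> Nlt c d = r.-1 ->
  order_stat z r = Y <-> forall t : 'I_D, (d <= t)%N -> (Y <= z t)%R.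
Proof.
move=> r_range Neq_gt0 Nlt_r.
have tail_lt0 : order_stat z r = Y <-> tail_lt = 0%N.
  split=> [/eqP|tail0]; last apply/eqP; rewrite order_stat_prefixE // Nlt_r.
    by move=> /andP[]; lia.
  by apply/andP; split; lia.
apply: (iff_trans tail_lt0); apply: (iff_trans (tail_count_eq0 _ _ _)).
by split=> tail t /tail; rewrite leNgt.
Qed.

Lemma order_stat_eq_tail_le {r : nat} : (1 <= r <= D)%N ->
  (0 < Neq c d)%N -> Ngt c d = (D - r)%N ->
  order_stat z r = Y <-> forall t : 'I_D, (d <= t)%N -> (z t <= Y)%R.
Proof.
move=> r_range Neq_gt0 Ngt_r.
have prefix := prefix_counts_sum c d; have tails := tail_counts_sum.
have tail_gt0 : order_stat z r = Y <-> tail_gt = 0%N.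
  split=> [/eqP|tail0]; last apply/eqP; rewrite order_stat_prefixE //.
    by move=> /andP[]; lia.
  by apply/andP; split; lia.
apply: (iff_trans tail_gt0); apply: (iff_trans (tail_count_eq0 _ _ _)).
by split=> tail t /tail; rewrite leNgt.
Qed.

Lemma order_stat_eq_forced {r : nat} : (1 <= r <= D)%N ->
  (r <= Nlt c d + Neq c d)%N -> (D < r + Ngt c d + Neq c d)%N -> order_stat z r = Y.
Proof.
move=> r_range r_le D_lt; apply/eqP; rewrite order_stat_prefixE //.
have prefix := prefix_counts_sum c d; have tails := tail_counts_sum.
by apply/andP; split; lia.
Qed.

End ConditioningPrefix.

Lemma ge0_esumZl (R : realType) (T : choiceType) (S : set T) (a : T -> \bar R) (k : R) :
  (0 <= k)%R -> (forall x, 0 <= a x)%E ->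
  (\esum_(i in S) (k%:E * a i) = k%:E * \esum_(i in S) a i)%E.
Proof.
move=> k_ge0 a_ge0; rewrite /esum -ereal_supZl //; last first.
  by apply/set0P; exists 0%E; exists set0; [exact: fsets_set0 | rewrite fsbig_set0].
congr ereal_sup; apply/seteqP; split=> x /=.
- by case=> A AS <-; exists (\sum_(i \in A) a i)%E; [exists A | rewrite ge0_mule_fsumr].
- by case=> y [A AS <-] <-; exists A => //; rewrite ge0_mule_fsumr.
Qed.

Definition fcons {T : Type} {n} (x : T) (w : {ffun 'I_n -> T}) : {ffun 'I_n.+1 -> T} :=
  [ffun i => if unlift ord0 i is Some j then w j else x].

Lemma fcons0 {T : Type} {n} (x : T) (w : {ffun 'I_n -> T}) : fcons x w ord0 = x.
Proof. by rewrite ffunE unlift_none. Qed.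

Lemma fconsS {T : Type} {n} (x : T) (w : {ffun 'I_n -> T}) j : fcons x w (lift ord0 j) = w j.
Proof. by rewrite ffunE liftK. Qed.

Lemma set_bij_fcons {T : choiceType} {n} (A : 'I_n.+1 -> set T) :
  set_bij (A ord0 `*`` fun=> [set w : {ffun 'I_n -> T} | forall t : 'I_n, A (lift ord0 t) (w t)])
          [set z : {ffun 'I_n.+1 -> T} | forall t, A t (z t)] (fun p => fcons p.1 p.2).
Proof.
split.
- move=> [x w] /= [Ax Aw] t; case: (unliftP ord0 t) => [j ->|->].
    by rewrite fconsS; apply: Aw.
  by rewrite fcons0.
- move=> [x w] [x' w'] _ _ /= e; congr pair.
    by rewrite -(fcons0 x w) e fcons0.
  by apply/ffunP => j; rewrite -(fconsS x w) e fconsS.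
- move=> z /= Az; exists (z ord0, [ffun j => z (lift ord0 j)]).
    by split=> //= t; rewrite ffunE; apply: Az.
  apply/ffunP => t; case: (unliftP ord0 t) => [j ->|->].
    by rewrite fconsS ffunE.
  by rewrite fcons0.
Qed.

Definition prod_set {D} (A : 'I_D -> set int) : set {ffun 'I_D -> int} :=
  [set z | forall t, A t (z t)].

Section PmfMass.
Context {R : realType} {f : int -> R} (f_pmf : is_pmf f).

Lemma mass_ge0 (S : set int) : 0 <= mass f S.
Proof. by rewrite fine_ge0 // esum_ge0 // => x _; rewrite lee_fin f_pmf.1. Qed.

Lemma esum_mass (S : set int) : (\esum_(x in S) (f x)%:E = (mass f S)%:E)%E.
Proof.
have [f_ge0 f_sum1] := f_pmf; rewrite /mass fineK // ge0_fin_numE; last first.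
  by apply: esum_ge0 => x _; rewrite lee_fin.
rewrite (@le_lt_trans _ _ 1%E) ?ltry // -f_sum1 esum_mkcond.
by apply: le_esum => x _; case: ifP; rewrite ?lee_fin.
Qed.

Lemma mass_set1I (S : set int) (y : int) : mass f ([set y] `&` S) = \1_S y * f y.
Proof.
rewrite indicE /mass; have [Sy | nSy] := boolP (y \in S).
  by rewrite setIidl ?sub1set // esum_set1 ?lee_fin ?f_pmf.1 // mul1r.
rewrite mul0r (_ : _ `&` _ = set0) ?esum_set0 //.
by apply/seteqP; split=> x //= [xy Sx]; move: nSy; rewrite -xy mem_set.
Qed.

Lemma trunc_mass (S : set int) (y : int) : trunc f S y = mass f ([set y] `&` S) / mass f S.
Proof. by rewrite mass_set1I. Qed.

Lemma trunc_setT : trunc f setT = f.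
Proof.
by apply/funext => y; rewrite /trunc indicE in_setT mul1r /mass f_pmf.2 divr1.
Qed.

Lemma esum_prod_mass n (A : 'I_n -> set int) :
  (\esum_(z in prod_set A)
     (\prod_(t < n) f (z t))%:E = (\prod_(t < n) mass f (A t))%:E)%E.
Proof.
elim: n A => [|n IH] A.
  have -> : prod_set A = [set [ffun i => 0%R]].
    by apply/seteqP; split=> z /= _; [apply/ffunP => -[] | case].
  by rewrite esum_set1 ?big_ord0 ?lee_fin.
rewrite (@reindex_esum _ _ _ _ _ _ _ (set_bij_fcons A)).
rewrite -(esum_esum (a := fun x w => (\prod_(t < n.+1) f (fcons x w t))%:E)); last first.
  by move=> x w _ _; rewrite lee_fin prodr_ge0 // => t _; apply: f_pmf.1.
under eq_esum => x _.
  under eq_esum => w _ do rewrite big_ord_recl fcons0 EFinM.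
  under eq_esum => w _ do under eq_bigr => j _ do rewrite fconsS.
  rewrite ge0_esumZl ?lee_fin ?f_pmf.1 //; last first.
    by move=> w; rewrite lee_fin prodr_ge0 // => t _; apply: f_pmf.1.
  rewrite (IH (fun t => A (lift ord0 t))) muleC; over.
rewrite ge0_esumZl; last by move=> x; rewrite lee_fin f_pmf.1.
  by rewrite esum_mass -EFinM mulrC big_ord_recl.
by apply: prodr_ge0 => t _; apply: mass_ge0.
Qed.

Lemma Pr_prod_set D (A : 'I_D -> set int) : Pr f (prod_set A) = \prod_(t < D) mass f (A t).
Proof. by rewrite /Pr esum_prod_mass. Qed.

Lemma condPr_prod_set D (A B : 'I_D -> set int) :
  condPr f (prod_set A) (prod_set B) = \prod_(t < D) (mass f (B t `&` A t) / mass f (A t)).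
Proof.
rewrite /condPr; have -> : prod_set B `&` prod_set A = prod_set (fun t => B t `&` A t).
  by apply/seteqP; split=> z /= => [[zB zA] t | zBA]; [split; [apply: zB | apply: zA]
    | split=> t; have [] := zBA t].
by rewrite !Pr_prod_set big_split /= prodfV.
Qed.

Lemma cond_indep_prod_set D (A : 'I_D -> set int) :
  0 < Pr f (prod_set A) -> cond_indep_with_laws f (prod_set A) (fun t => trunc f (A t)).
Proof.
rewrite Pr_prod_set => /lt0r_neq0 Pr_neq0.
have mass_neq0 t : mass f (A t) != 0.
  by apply: contra Pr_neq0 => /eqP mass0; rewrite (bigD1 t) //= mass0 mul0r.
have coord t y : condPr f (prod_set A) [set z : {ffun 'I_D -> int} | z t = y] = trunc f (A t) y.
  have -> : [set z : {ffun 'I_D -> int} | z t = y] =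
            prod_set (fun s => if s == t then [set y] else setT).
    by apply/seteqP; split=> z /= => [<- s | /(_ t)]; [case: eqP => [->|] | rewrite eqxx].
  rewrite condPr_prod_set (bigD1 t) //= eqxx big1 ?mulr1 ?trunc_mass // => s /negPf ->.
  by rewrite setTI divff.
split=> [z|//]; under eq_bigr do rewrite coord.
have -> : [set z' : {ffun 'I_D -> int} | forall t, z' t = z t] = prod_set (fun t => [set z t]).
  by [].
by rewrite condPr_prod_set; apply: eq_bigr => t _; rewrite trunc_mass.
Qed.

End PmfMass.

Lemma cmp_setP (Y x : int) (k : cmp) : cls Y x = k <-> cmp_set Y k x.
Proof. by rewrite /cls; case: ltgtP; case: k => //= h; split=> // e; lia. Qed.

Lemma cond_event_prod_set {D} {Y : int} {r d} {c : nat -> cmp} {G : set int} :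
  (forall z : {ffun 'I_D -> int}, (forall t : 'I_D, (t < d)%N -> cls Y (z t) = c t) ->
     (order_stat z r = Y <-> forall t : 'I_D, (d <= t)%N -> G (z t))) ->
  cond_event D Y r d c = prod_set (fun t : 'I_D => if (t < d)%N then cmp_set Y (c t) else G).
Proof.
move=> tail_iff; apply/seteqP; split=> z /=.
  move=> [z_prefix z_stat] t; case: ifP => t_d; first by apply/cmp_setP/z_prefix.
  by apply: (tail_iff z z_prefix).1; rewrite // leqNgt t_d.
move=> z_prod; have z_prefix (t : 'I_D) : (t < d)%N -> cls Y (z t) = c t.
  by move=> t_d; apply/cmp_setP; move: (z_prod t); rewrite t_d.
split=> //; apply/(tail_iff z z_prefix) => t; rewrite leqNgt => /negbTE t_d.
by move: (z_prod t); rewrite t_d.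
Qed.

Lemma cond_indep_tail_law (R : realType) (f : int -> R) D (Y : int) r d (c : nat -> cmp)
  (G : set int) :
  is_pmf f ->
  (forall z : {ffun 'I_D -> int}, (forall t : 'I_D, (t < d)%N -> cls Y (z t) = c t) ->
     (order_stat z r = Y <-> forall t : 'I_D, (d <= t)%N -> G (z t))) ->
  0 < Pr f (cond_event D Y r d c) ->
  cond_indep_with_laws f (cond_event D Y r d c) (mixed_law f D Y d c (trunc f G)).
Proof.
move=> f_pmf tail_iff; rewrite (cond_event_prod_set tail_iff) => /(cond_indep_prod_set f_pmf).
have -> // : mixed_law f D Y d c (trunc f G) =
  (fun t => trunc f (if (t < d)%N then cmp_set Y (c t) else G)).
by apply/funext => t; rewrite /mixed_law; case: ifP.
Qed.

Theorem theorem5p3 (R : realType) (f : int -> R) (D r d : nat) (Y : int)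
  (c : nat -> cmp) :
  is_pmf f ->
  (1 <= r <= D)%N ->
  (1 <= d < D)%N ->
  0 < Pr f (cond_event D Y r d c) ->
  (* condition (1) *)
  (((0 < Neq c d)%N /\ Nlt c d = r.-1) ->
     cond_indep_with_laws f (cond_event D Y r d c)
       (mixed_law f D Y d c (trunc f [set x : int | (Y <= x)%R])))
  /\
  (* condition (2) *)
  (((0 < Neq c d)%N /\ Ngt c d = (D - r)%N) ->
     cond_indep_with_laws f (cond_event D Y r d c)
       (mixed_law f D Y d c (trunc f [set x : int | (x <= Y)%R])))
  /\
  (* condition (3) *)
  ((Neq c d)%:Z = Num.max (r%:Z - (Nlt c d)%:Z)
                          (D%:Z - r%:Z - (Ngt c d)%:Z + 1) ->
     cond_indep_with_laws f (cond_event D Y r d c)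
       (mixed_law f D Y d c f)).
Proof.
move=> f_pmf r_range /andP[_ /ltnW d_le] Pr_gt0; split; [|split].
- case=> Neq_gt0 Nlt_r; apply: cond_indep_tail_law => // z z_prefix.
  exact (order_stat_eq_tail_ge d_le z_prefix r_range Neq_gt0 Nlt_r).
- case=> Neq_gt0 Ngt_r; apply: cond_indep_tail_law => // z z_prefix.
  exact (order_stat_eq_tail_le d_le z_prefix r_range Neq_gt0 Ngt_r).
- move=> Neq_max; rewrite -[X in mixed_law _ _ _ _ _ X](trunc_setT f_pmf).
  apply: cond_indep_tail_law => // z z_prefix; split=> // _.
  have Neq_ge_lt : (r%:Z - (Nlt c d)%:Z <= (Neq c d)%:Z)%R by rewrite Neq_max le_max lexx.
  have Neq_ge_gt : (D%:Z - r%:Z - (Ngt c d)%:Z + 1 <= (Neq c d)%:Z)%R.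
    by rewrite Neq_max le_max lexx orbT.
  by apply: (order_stat_eq_forced d_le z_prefix r_range); lia.
Qed.
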